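(* Let $n\ge4$, $x_1,\dots,x_{n-1}>0$, $\gamma,\delta>0$ with $\gamma\ne1\ne\delta$, $x_0=1$, and let $\mathbf{P}$ be the $n\times n$ matrix with entries $p_{ij}=x_{j-1}/x_{i-1}$ except $p_{12}=\delta x_1$, $p_{21}=1/(\delta x_1)$, $p_{13}=\gamma x_2$, $p_{31}=1/(\gamma x_2)$. Let $\mathbf{w}^{EM}$ be the principal right eigenvector of $\mathbf{P}$. Then for $i=4,\dots,n$: $\delta>1$ iff $w_2^{EM}/w_i^{EM}<x_{i-1}/x_1$, and $\delta<1$ iff $w_2^{EM}/w_i^{EM}>x_{i-1}/x_1$.
   Context: The principal right eigenvector is the positive (Perron) eigenvector belonging to the largest eigenvalue. *)

From HB Require Import structures.
From mathcomp Require Import all_boot all_order all_algebra.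
Set Implicit Arguments. Unset Strict Implicit. Unset Printing Implicit Defensive.
Import Order.TTheory GRing.Theory Num.Theory.
Local Open Scope ring_scope.

(* Indices are 0-based: entry (i,j) of the paper (1-based) is entry (i-1,j-1) here.
   x : nat -> R with x 0 = 1 intended; p_ij = x_{j-1}/x_{i-1} except the four
   perturbed entries p12 = delta x1, p21 = 1/(delta x1), p13 = gamma x2,
   p31 = 1/(gamma x2). *)
Definition pertMx (R : fieldType) (n : nat) (x : nat -> R) (gamma delta : R)
  : 'M[R]_n :=
  \matrix_(i < n, j < n)
    if ((i == 0 :> nat) && (j == 1 :> nat)) then delta * x 1%N
    else if ((i == 1 :> nat) && (j == 0 :> nat)) then (delta * x 1%N)^-1
    else if ((i == 0 :> nat) && (j == 2 :> nat)) then gamma * x 2%N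
    else if ((i == 2 :> nat) && (j == 0 :> nat)) then (gamma * x 2%N)^-1
    else x j / x i.

Definition principal_right_eigenvector (R : realFieldType) (n : nat)
  (A : 'M[R]_n) (w : 'cV[R]_n) : Prop :=
  (forall i, 0 < w i 0) /\
  exists lambda : R,
    [/\ eigenvalue A lambda,
        A *m w = lambda *: w &
        forall mu : R, eigenvalue A mu -> mu <= lambda].

From HB Require Import structures.
From mathcomp Require Import all_boot all_order all_algebra.
From mathcomp Require Import zify ring.
Set Implicit Arguments. Unset Strict Implicit. Unset Printing Implicit Defensive.
Import Order.TTheory GRing.Theory Num.Theory.
Local Open Scope ring_scope.

(* Rows 4..n of P are consistent, p_ij = x_{j-1}/x_{i-1}, so for them
   lambda w_i x_{i-1} = T := sum_j x_{j-1} w_j; in particular lambda > 0.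
   Row 2 differs from a consistent row only in its first entry, divided by
   delta, so lambda w_2 x_1 = T + (1/delta - 1) w_1.  Subtracting,
   lambda (x_{i-1} w_i - x_1 w_2) = (1 - 1/delta) w_1, whose sign is that of
   delta - 1. *)

Section ConsistentRows.

Variables (R : fieldType) (n : nat) (A : 'M[R]_n) (x : nat -> R) (w : 'cV[R]_n).

Lemma mulmx_consistent_row (k : 'I_n) :
  x k != 0 -> (forall j : 'I_n, A k j = x j / x k) ->
  (A *m w) k 0 * x k = \sum_(j < n) x j * w j 0.
Proof.
move=> xk_neq0 Ak; rewrite mxE mulr_suml; apply: eq_bigr => j _.
by rewrite Ak mulrAC divfK.
Qed.

Lemma mulmx_rescaled_row (k j0 : 'I_n) (d : R) :
  x k != 0 -> A k j0 = x j0 / x k / d ->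
  (forall j : 'I_n, j != j0 -> A k j = x j / x k) ->
  (A *m w) k 0 * x k = \sum_(j < n) x j * w j 0 + (d^-1 - 1) * (x j0 * w j0 0).
Proof.
move=> xk_neq0 Akj0 Ak; rewrite mxE mulr_suml (bigD1 j0) //=.
rewrite [in RHS](bigD1 j0) //= addrAC.
rewrite (eq_bigr (fun j : 'I_n => x j * w j 0)) => [|j /Ak ->]; last first.
  by rewrite mulrAC divfK.
congr (_ + _); rewrite mulrBl mul1r addrC subrK Akj0 mulrAC.
by rewrite [_ / d * _]mulrAC divfK // mulrAC mulrC.
Qed.

End ConsistentRows.

Lemma consistent_row_eigenvalue_gt0 (R : realFieldType) (n : nat)
    (A : 'M[R]_n) (x : nat -> R) (w : 'cV[R]_n) (l : R) (k : 'I_n) :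
  (forall j : 'I_n, 0 < x j) -> (forall j, 0 < w j 0) ->
  (forall j : 'I_n, A k j = x j / x k) -> A *m w = l *: w -> 0 < l.
Proof.
move=> xpos wpos Ak Aw.
have sum_gt0 : 0 < \sum_(j < n) x j * w j 0.
  rewrite (bigD1 k) //= ltr_wpDr ?mulr_gt0 //.
  by apply: sumr_ge0 => j _; rewrite mulr_ge0 ?ltW.
move: sum_gt0; rewrite -(mulmx_consistent_row w (lt0r_neq0 (xpos k)) Ak) Aw mxE.
by rewrite -mulrA pmulr_lgt0 // mulr_gt0.
Qed.

Section PerturbedMatrix.

Variables (R : fieldType) (n : nat) (x : nat -> R) (gamma delta : R).

Lemma pertMx_consistent_row (k : 'I_n) :
  (3 <= k)%N -> forall j, pertMx n x gamma delta k j = x j / x k.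
Proof.
move=> k_ge3 j; rewrite mxE.
have [k0 k1 k2] : [/\ (k == 0 :> nat) = false, (k == 1 :> nat) = false
                    & (k == 2 :> nat) = false] by split; apply/eqP; lia.
by rewrite k0 k1 k2.
Qed.

Lemma pertMx_row1 (k j : 'I_n) :
  k = 1%N :> nat -> j != 0%N :> nat -> pertMx n x gamma delta k j = x j / x k.
Proof. by move=> k1 /negPf j_neq0; rewrite mxE k1 j_neq0. Qed.

Lemma pertMx_row1_col0 (k j : 'I_n) :
  k = 1%N :> nat -> j = 0%N :> nat -> x 0%N = 1 ->
  pertMx n x gamma delta k j = x j / x k / delta.
Proof. by move=> k1 j0 x0; rewrite mxE k1 j0 x0 /= invfM mul1r mulrC. Qed.

Lemma pertMx_eigen_gap (w : 'cV[R]_n) (l : R) (j0 i1 i : 'I_n) :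
  x 0%N = 1 -> x 1%N != 0 -> x i != 0 ->
  j0 = 0%N :> nat -> i1 = 1%N :> nat -> (3 <= i)%N ->
  pertMx n x gamma delta *m w = l *: w ->
  l * (x i * w i 0 - w i1 0 * x 1%N) = (1 - delta^-1) * w j0 0.
Proof.
move=> x0 x1_neq0 xi_neq0 j00 i11 i_ge3 Aw.
have row_i := mulmx_consistent_row w xi_neq0 (pertMx_consistent_row i_ge3).
have xi1_neq0 : x i1 != 0 by rewrite i11.
have row1_off_j0 j : j != j0 -> pertMx n x gamma delta i1 j = x j / x i1.
  by move=> j_neq_j0; apply: pertMx_row1 => //; rewrite -j00.
have row_i1 := mulmx_rescaled_row w xi1_neq0 (pertMx_row1_col0 i11 j00 x0) row1_off_j0.
rewrite Aw !mxE i11 j00 x0 mul1r in row_i row_i1.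
rewrite mulrBr [l * (x i * _)]mulrCA [x i * _]mulrC row_i mulrA row_i1.
ring.
Qed.

End PerturbedMatrix.

Lemma gap_sign (R : numFieldType) (l D d c : R) :
  0 < l -> 0 < c -> 0 < d -> l * D = (1 - d^-1) * c ->
  (0 < D) = (1 < d) /\ (D < 0) = (d < 1).
Proof.
move=> l_gt0 c_gt0 d_gt0 gap; split.
  by rewrite -(pmulr_rgt0 D l_gt0) gap pmulr_lgt0 // subr_gt0 invf_lt1.
by rewrite -(pmulr_rlt0 D l_gt0) gap pmulr_llt0 // subr_lt0 invf_gt1.
Qed.

Lemma ltr_cross_ratio (R : numFieldType) (a b c d : R) :
  0 < b -> 0 < d -> (a / b < c / d) = (a * d < c * b).
Proof. by move=> b_gt0 d_gt0; rewrite ltr_pdivrMr // mulrAC ltr_pdivlMr. Qed.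

Theorem mainTheorem10 (R : realFieldType) (n : nat) (x : nat -> R)
  (gamma delta : R) (w : 'cV[R]_n) :
  (4 <= n)%N ->
  x 0%N = 1 ->
  (forall k : nat, (1 <= k <= n.-1)%N -> 0 < x k) ->
  0 < gamma -> 0 < delta -> gamma != 1 -> delta != 1 ->
  principal_right_eigenvector (pertMx n x gamma delta) w ->
  forall i1 i : 'I_n, nat_of_ord i1 = 1%N -> (3 <= i)%N ->
    (1 < delta <-> w i1 0 / w i 0 < x i / x 1%N) /\
    (delta < 1 <-> w i1 0 / w i 0 > x i / x 1%N).
Proof.
move=> n_ge4 x0 xpos' _ delta_gt0 _ _ [wpos [l [_ Aw _]]] i1 i i11 i_ge3.
have xpos (j : 'I_n) : 0 < x j.
  case: (posnP j) => [->|j_gt0]; first by rewrite x0.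
  by apply: xpos'; have := ltn_ord j; lia.
have x1_gt0 : 0 < x 1%N by rewrite -i11.
pose j0 : 'I_n := Ordinal (ltn_trans (isT : 0 < 3)%N n_ge4).
have gap := pertMx_eigen_gap x0 (lt0r_neq0 x1_gt0) (lt0r_neq0 (xpos i))
  (erefl : j0 = 0%N :> nat) i11 i_ge3 Aw.
have l_gt0 := consistent_row_eigenvalue_gt0 xpos wpos
  (pertMx_consistent_row x gamma delta i_ge3) Aw.
have [D_gt0 D_lt0] := gap_sign l_gt0 (wpos j0) delta_gt0 gap.
rewrite !ltr_cross_ratio // -[_ < x i * _]subr_gt0 -[x i * _ < _]subr_lt0.
by rewrite D_gt0 D_lt0.
Qed.
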